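(* If the distributed theory $\mathcal T$ is permaconsistent, then $D^*_{\mathcal T}((\bot_{\mathcal A},\top_{\mathcal A}))$ is universally consistent, where $\bot_{\mathcal A}=(\bot)_{A\in\mathcal A}$ and $\top_{\mathcal A}=(\top)_{A\in\mathcal A}$.
   Context: Standing setup (dAEL). $\Sigma=\Sigma_o\uplus\Sigma_s$ is a first-order vocabulary (objective and subjective symbols). A nonempty domain $D$ and a $\Sigma_o$-structure $I_o$ with domain $D$ are fixed, as is a set of agents $\mathcal{A}\subseteq D$. For each $A\in\mathcal{A}$ there is a constant $A\in\Sigma_o$ with $A^{I_o}=A$, and $\Sigma_o$ contains a unary predicate $\mathrm{Apred}$ with $\mathrm{Apred}^{I_o}=\mathcal{A}$. ''Structure'' means a $\Sigma$-structure with domain $D$ that agrees with $I_o$ on $\Sigma_o$. Formulas of dAEL are built from atoms $P(\bar t)$ ($P\in\Sigma$ or equality) using $\wedge,\neg,\forall x$, and the modal rule: if $\varphi$ is a formula and $t$ a term then $K_t\varphi$ is a formula ($\vee,\Rightarrow,\Leftrightarrow,\exists$ are the usual abbreviations). Truth values are $\mathbf t,\mathbf f,\mathbf u$ with truth order $\mathbf f<_t\mathbf u<_t\mathbf t$; $\mathbf t^{-1}=\mathbf f$, $\mathbf f^{-1}=\mathbf t$, $\mathbf u^{-1}=\mathbf u$. A possible world structure (PWS) is a set of structures; $Q_1\le_K Q_2$ iff $Q_2\subseteq Q_1$; $\bot$ denotes the set of all structures and $\top=\emptyset$. A distributed possible world structure (DPWS) is a family $\mathcal Q=(\mathcal Q_A)_{A\in\mathcal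 A}$ of PWSs, ordered pointwise by $\le_K$. A distributed belief pair (DBP) is a pair $\mathcal B=(\mathcal B^c,\mathcal B^l)$ of DPWSs. Three-valued value $\varphi^{\mathcal B,I,a}$ for any pair $\mathcal B$ of DPWSs: atoms get their two-valued value in $I$; $\neg$ is interpreted by ${}^{-1}$, and $\wedge$, $\forall$ by $\le_t$-greatest lower bound (Kleene); $(K_t\varphi)^{\mathcal B,I,a}$ is $\mathbf t$ if $t^{I,a}\in\mathcal A$ and $\varphi^{\mathcal B,J,a}=\mathbf t$ for all $J\in\mathcal B^c_{t^{I,a}}$; it is $\mathbf f$ if $t^{I,a}\notin\mathcal A$ or $\varphi^{\mathcal B,J,a}=\mathbf f$ for some $J\in\mathcal B^l_{t^{I,a}}$; and $\mathbf u$ otherwise. For sentences the assignment is omitted, and the value of a set of sentences is the $\le_t$-glb of the values of its members. A distributed theory is a family $\mathcal T=(\mathcal T_A)_{A\in\mathcal A}$ of sets of dAEL sentences. $D^*_{\mathcal T}(\mathcal B)=(D^c_{\mathcal T}(\mathcal B),D^l_{\mathcal T}(\mathcal B))$ with $D^c_{\mathcal T}(\mathcal B)_A=\{I:\mathcal T_A^{\mathcal B,I}\ne\mathbf f\}$ and $D^l_{\mathcal T}(\mathcal B)_A=\{I:\mathcal T_A^{\mathcal B,I}=\mathbf t\}$. Universal consistency: a DPWS $\mathcal Q$ is universally consistent if $\mathcal Q_A\neq\emptyset$ for all $A\in\mathcal A$; a DBP $\mathcal B$ is universally consistent if $\mathcal B^l$ is. Permaconsistency: $\mathcal T$ is permaconsistent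 if for each $A\in\mathcal A$ and each theory $T'$ obtained from $\mathcal T_A$ by replacing each occurrence of a subformula $K_t\varphi$ that is not nested under a modal operator by $\mathbf t$ or by $\mathbf f$ (independently per occurrence), $T'$ has a model that is a structure (i.e. expands $I_o$). *)

From mathcomp Require Import ssreflect ssrfun ssrbool eqtype ssrnat fintype.
From Stdlib Require Import ClassicalEpsilon.

(* A first-order vocabulary Sigma = Sigma_o (+) Sigma_s: function symbols
   (constants are 0-ary) and predicate symbols, each with an arity, and a
   flag saying whether the symbol is objective (true) or subjective (false). *)
Record vocab := Vocab {
  Fsym : Type; Psym : Type;
  farity : Fsym -> nat; parity : Psym -> nat;
  fobj : Fsym -> bool; pobj : Psym -> bool }.

Section DAEL.
Variable S : vocab.
Variable D : Type.

Record structure := Struct {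
  fint : forall f : Fsym S, ('I_(farity S f) -> D) -> D;
  pint : forall p : Psym S, ('I_(parity S p) -> D) -> bool }.

Inductive term :=
| Var : nat -> term
| App : forall f : Fsym S, ('I_(farity S f) -> term) -> term.

Inductive formula :=
| FAtom : forall p : Psym S, ('I_(parity S p) -> term) -> formula
| FEq : term -> term -> formula
| FAnd : formula -> formula -> formula
| FNeg : formula -> formula
| FForall : nat -> formula -> formula
| FK : term -> formula -> formula.

Fixpoint term_has (x : nat) (t : term) : Prop :=
  match t with
  | Var n => n = x
  | App f args => exists i, term_has x (args i)
  end.

Fixpoint free_in (x : nat) (phi : formula) : Prop :=
  match phi with
  | FAtom p args => exists i, term_has x (args i)
  | FEq t1 t2 => term_has x t1 \/ term_has x t2
  | FAnd a b => free_in x a \/ free_in x b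
  | FNeg a => free_in x a
  | FForall y a => y <> x /\ free_in x a
  | FK t a => term_has x t \/ free_in x a
  end.

Definition sentence (phi : formula) : Prop := forall x, ~ free_in x phi.

Fixpoint teval (I : structure) (a : nat -> D) (t : term) : D :=
  match t with
  | Var n => a n
  | App f args => fint I f (fun i => teval I a (args i))
  end.

Definition upd (a : nat -> D) (x : nat) (d : D) : nat -> D :=
  fun y => if Nat.eqb y x then d else a y.

(* Three truth values with truth order f < u < t *)
Inductive tv := tT | tF | tU.

Definition tinv (v : tv) : tv :=
  match v with tT => tF | tF => tT | tU => tU end.

Definition pdec (P : Prop) : {P} + {~ P} := excluded_middle_informative P.

Definition tglb {X : Type} (F : X -> tv) : tv :=
  if pdec (forall x, F x = tT) then tT
  else if pdec (exists x, F x = tF) then tF else tU.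

Definition tmin (v w : tv) : tv := tglb (fun b : bool => if b then v else w).

Definition pws := structure -> Prop.
Definition dpws := D -> pws.
Definition dbp := (dpws * dpws)%type.

Variable Ag : pred D.

Fixpoint val (B : dbp) (phi : formula) (I : structure) (a : nat -> D) : tv :=
  match phi with
  | FAtom p args => if pint I p (fun i => teval I a (args i)) then tT else tF
  | FEq t1 t2 => if pdec (teval I a t1 = teval I a t2) then tT else tF
  | FAnd p q => tmin (val B p I a) (val B q I a)
  | FNeg p => tinv (val B p I a)
  | FForall x p => tglb (fun d => val B p I (upd a x d))
  | FK t p =>
      let d := teval I a t in
      if pdec (Ag d /\ forall J, B.1 d J -> val B p J a = tT) then tT
      else if pdec (~~ Ag d \/ exists J, B.2 d J /\ val B p J a = tF) then tF
      else tU
  end.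

Variable d0 : D.  (* witness of nonemptiness of D; used as the (irrelevant)
                      assignment when evaluating sentences *)

Definition sval (B : dbp) (phi : formula) (I : structure) : tv :=
  val B phi I (fun _ => d0).

Definition thval (B : dbp) (T : formula -> Prop) (I : structure) : tv :=
  tglb (fun s : {phi | T phi} => sval B (proj1_sig s) I).

Variable Io : structure.

(* "structure" = Sigma-structure with domain D agreeing with I_o on Sigma_o *)
Definition is_struct (I : structure) : Prop :=
  (forall f, fobj S f -> forall args, fint I f args = fint Io f args) /\
  (forall p, pobj S p -> forall args, pint I p args = pint Io p args).

Definition pws_bot : pws := is_struct.
Definition pws_top : pws := fun _ => False.
Definition dpws_bot : dpws := fun _ => pws_bot.
Definition dpws_top : dpws := fun _ => pws_top.

Definition dtheory := D -> (formula -> Prop).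

Definition Dstar (T : dtheory) (B : dbp) : dbp :=
  (fun A I => is_struct I /\ thval B (T A) I <> tF,
   fun A I => is_struct I /\ thval B (T A) I = tT).

Definition univ_consistent_dpws (Q : dpws) : Prop :=
  forall A, Ag A -> exists I, Q A I.
Definition univ_consistent (B : dbp) : Prop := univ_consistent_dpws B.2.

(* formulas with truth constants, resulting from replacing top-level modal
   subformulas by t or f *)
Inductive cformula :=
| CAtom : forall p : Psym S, ('I_(parity S p) -> term) -> cformula
| CEq : term -> term -> cformula
| CAnd : cformula -> cformula -> cformula
| CNeg : cformula -> cformula
| CForall : nat -> cformula -> cformula
| CTrue : cformula
| CFalse : cformula.

Inductive repl : formula -> cformula -> Prop :=
| ReplAtom p args : repl (FAtom p args) (CAtom p args)
| ReplEq t1 t2 : repl (FEq t1 t2) (CEq t1 t2)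
| ReplAnd p q p' q' : repl p p' -> repl q q' -> repl (FAnd p q) (CAnd p' q')
| ReplNeg p p' : repl p p' -> repl (FNeg p) (CNeg p')
| ReplForall x p p' : repl p p' -> repl (FForall x p) (CForall x p')
| ReplKT t p : repl (FK t p) CTrue
| ReplKF t p : repl (FK t p) CFalse.

Fixpoint csat (I : structure) (a : nat -> D) (psi : cformula) : Prop :=
  match psi with
  | CAtom p args => pint I p (fun i => teval I a (args i)) = true
  | CEq t1 t2 => teval I a t1 = teval I a t2
  | CAnd p q => csat I a p /\ csat I a q
  | CNeg p => ~ csat I a p
  | CForall x p => forall d, csat I (upd a x d) p
  | CTrue => True
  | CFalse => False
  end.

Definition permaconsistent (T : dtheory) : Prop :=
  forall A, Ag A ->
  forall c : formula -> cformula,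
    (forall phi, T A phi -> repl phi (c phi)) ->
    exists I, is_struct I /\ forall phi, T A phi -> csat I (fun _ => d0) (c phi).

End DAEL.

Definition dael_setup (S : vocab) (D : Type) (Ag : pred D) (Io : structure S D) : Prop :=
  (forall A, Ag A -> exists f, fobj S f /\ exists h : farity S f = 0,
        forall args, fint _ _ Io f args = A) /\
  (exists p, pobj S p /\ exists h : parity S p = 1,
        forall args : 'I_(parity S p) -> D,
          pint _ _ Io p args = Ag (args (eq_rect_r (fun n => 'I_n) ord0 h))).

From Pilot Require Import Defs.
From mathcomp Require Import ssreflect ssrfun ssrbool eqtype ssrnat fintype.
From Stdlib Require Import Classical.

(* Among the replacements allowed by permaconsistency there is a
   "pessimistic" one: every top-level modal subformula K_t chi is replaced by
   f when it occurs positively (under an even number of negations) and by t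
   when it occurs negatively.  Whatever the pair B of DPWSs, the three-valued
   value of a modal atom is at most t and at least f, so a two-valued model of
   the pessimistic replacement of phi makes phi^{B,I} = t (and a structure
   falsifying the replacement with the dual polarity makes phi^{B,I} = f).
   Hence a model I of the pessimistic replacement of T_A, which exists by
   permaconsistency, satisfies T_A^{B,I} = t, i.e. I lies in D^l_T(B)_A.
   This holds for every B, in particular for (bot_A, top_A), which gives
   universal consistency. *)

Lemma tglb_allT (X : Type) (F : X -> tv) :
  (forall x, F x = tT) -> tglb F = tT.
Proof. by rewrite /tglb => allT; case: pdec. Qed.

Lemma tglb_someF (X : Type) (F : X -> tv) (x : X) :
  F x = tF -> tglb F = tF.
Proof.
rewrite /tglb => Fx.
destruct (pdec (forall y, F y = tT)) as [allT | notallT]; first by rewrite allT in Fx.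
by destruct (pdec (exists y, F y = tF)) as [someF | noF] => //; case: noF; exists x.
Qed.

Section Pessimistic.
Variable S : vocab.

Fixpoint pessimistic (pol : bool) (phi : formula S) : cformula S :=
  match phi with
  | FAtom p args => CAtom S p args
  | FEq t1 t2 => CEq S t1 t2
  | FAnd p q => CAnd S (pessimistic pol p) (pessimistic pol q)
  | FNeg p => CNeg S (pessimistic (~~ pol) p)
  | FForall x p => CForall S x (pessimistic pol p)
  | FK _ _ => if pol then CFalse S else CTrue S
  end.

Lemma pessimistic_repl (pol : bool) (phi : formula S) :
  repl S phi (pessimistic pol phi).
Proof.
elim: phi pol => [p args|t1 t2|p IHp q IHq|p IHp|x p IHp|t p _] pol /=;
  try (case: pol); constructor; auto.
Qed.

Variables (D : Type) (Ag : pred D) (B : dbp S D) (I : structure S D).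

Lemma pessimistic_sound (phi : formula S) (a : nat -> D) :
  (csat S D I a (pessimistic true phi) -> Defs.val S D Ag B phi I a = tT) /\
  (~ csat S D I a (pessimistic false phi) -> Defs.val S D Ag B phi I a = tF).
Proof.
elim: phi a => /= [p args|t1 t2|p IHp q IHq|p IHp|x p IHp|t p _] a.
- by split; [move=> -> | case: (pint _ _ I p _)].
- by split; case: pdec.
- split=> [[satp satq] | unsat].
    by apply: tglb_allT => -[]; [apply: (proj1 (IHp a)) | apply: (proj1 (IHq a))].
  have [satp | unsatp] := classic (csat S D I a (pessimistic false p)).
    have unsatq : ~ csat S D I a (pessimistic false q) by move=> satq; apply: unsat.
    by apply: (@tglb_someF _ _ false); apply: (proj2 (IHq a)).
  by apply: (@tglb_someF _ _ true); apply: (proj2 (IHp a)).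
- split=> [unsat | sat]; first by rewrite (proj2 (IHp a) unsat).
  by rewrite (proj1 (IHp a) (NNPP _ sat)).
- split=> [sat | unsat]; first by apply: tglb_allT => d; apply: (proj1 (IHp _)).
  have [d unsat_d] := not_all_ex_not _ _ unsat.
  by apply: (@tglb_someF _ _ d); apply: (proj2 (IHp _)).
- by split=> // unsat; case: unsat.
Qed.

Lemma thval_pessimistic_model (d0 : D) (TA : formula S -> Prop) :
  (forall phi, TA phi -> csat S D I (fun _ => d0) (pessimistic true phi)) ->
  thval S D Ag d0 B TA I = tT.
Proof.
move=> model; apply: tglb_allT => -[phi TAphi] /=.
exact: (proj1 (pessimistic_sound phi _) (model phi TAphi)).
Qed.

End Pessimistic.

Lemma Dstar_univ_consistent (S : vocab) (D : Type) (d0 : D) (Ag : pred D)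
    (Io : structure S D) (T : dtheory S D) (B : dbp S D) :
  permaconsistent S D Ag d0 Io T -> univ_consistent S D Ag (Dstar S D Ag d0 Io T B).
Proof.
move=> perma A agA.
have [I [structI model]] :=
  perma A agA (pessimistic S true) (fun phi _ => pessimistic_repl S true phi).
by exists I; split; last exact: thval_pessimistic_model.
Qed.

(* The theorem is the instance B = (bot_A, top_A). *)
Theorem mainTheorem7 (S : vocab) (D : Type) (d0 : D) (Ag : pred D)
  (Io : structure S D) (Hsetup : dael_setup S D Ag Io)
  (T : dtheory S D)
  (Hsent : forall A, Ag A -> forall phi, T A phi -> sentence S phi) :
  permaconsistent S D Ag d0 Io T ->
  univ_consistent S D Ag
    (Dstar S D Ag d0 Io T (dpws_bot S D Io, dpws_top S D)).
Proof. exact: Dstar_univ_consistent. Qed.
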